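(* Let $k\ge 1$ and let $A_1,\dots,A_{2k-1}$ be (possibly empty) balanced parenthesis sequences inducing ordered matchings $M_1,\dots,M_{2k-1}$ respectively. Define parenthesis sequences $B_k=(A_k)$ and, for $j=k-1,k-2,\dots,1$, $B_j=(A_j\,B_{j+1}\,A_{2k-j})$ (concatenation inside one new pair of parentheses), so that $B_1=(A_1(A_2(\cdots(A_{k-1}(A_k)A_{k+1})\cdots)A_{2k-2})A_{2k-1})$. Then $B_1$ is a balanced parenthesis sequence; let $M$ be the matching it induces. Then $$r_<(M,K_3)\le r_<(NM_{k+t},K_3),\qquad\text{where } t=\sum_{i=1}^{k}\max\big(r_<(M_i,K_3),\,r_<(M_{2k-i},K_3)\big).$$
   Context: An ordered graph on $[N]$ is a graph with vertex set $\{1,\dots,N\}$ equipped with the natural order. Given a red/blue coloring of the edges of the complete graph on $[N]$, a red (ordered) copy of an ordered graph $G$ on $[p]$ is a strictly increasing map $\varphi:[p]\to[N]$ such that $\varphi(u)\varphi(v)$ is red for every edge $uv$ of $G$. The ordered Ramsey number $r_<(G,K_3)$ is the smallest $N$ such that every red/blue coloring of the edges of the complete graph on $[N]$ contains either a red ordered copy of $G$ or a blue triangle. A balanced parenthesis sequence of length $2m$ is a string of $m$ open and $m$ close parentheses that is correctly matched; it induces the ordered matching on $[2m]$ whose edges are the pairs $\{i,j\}$ such that the parenthesis in position $i$ is an open parenthesis matched with the close parenthesis in position $j$. The empty sequence induces the empty matching on $0$ vertices. The nested matching $NM_k$ is the ordered graph on $[2k]$ in which $\{i,j\}$ is an edge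 if and only if $i+j=2k+1$. *)

From Stdlib Require Import ClassicalDescription.
From mathcomp Require Import all_boot.
Set Implicit Arguments. Unset Strict Implicit. Unset Printing Implicit Defensive.

(* Vertices of an ordered graph on [p] are represented 0-indexed by 0..p-1
   (order-isomorphic to 1..p). Edges: oe u v for u < v < ov. *)
Record ograph := OGraph { ov : nat; oe : nat -> nat -> bool }.

(* A red/blue coloring of K_N on 'I_N: col (x,y) for x < y; true = red. *)
Definition coloring (N : nat) := {ffun 'I_N * 'I_N -> bool}.

Definition red N (col : coloring N) (x y : 'I_N) : bool :=
  if (x < y)%N then col (x, y) else col (y, x).

Definition has_red_copy (G : ograph) N (col : coloring N) : bool :=
  [exists phi : {ffun 'I_(ov G) -> 'I_N},
     [forall u : 'I_(ov G), forall v : 'I_(ov G),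
        ((u < v)%N ==> (phi u < phi v)%N) &&
        (((u < v)%N && oe G u v) ==> red col (phi u) (phi v))]].

Definition has_blue_triangle N (col : coloring N) : bool :=
  [exists a : 'I_N, exists b : 'I_N, exists c : 'I_N,
     [&& (a < b)%N, (b < c)%N, ~~ red col a b, ~~ red col b c & ~~ red col a c]].

Definition ramsey_K3_prop (G : ograph) (N : nat) : bool :=
  [forall col : coloring N, has_red_copy G col || has_blue_triangle col].

(* r_<(G, K_3): the least such N (0 if none exists, which never happens). *)
Definition ord_ramsey_K3 (G : ograph) : nat :=
  match excluded_middle_informative (exists N, ramsey_K3_prop G N) with
  | left h => ex_minn h
  | right _ => 0
  end.

(* Parenthesis sequences: true = '(' , false = ')'. *)
Definition balanced (s : seq bool) : bool :=
  (count id s == count negb s) &&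
  all (fun n => (count negb (take n s) <= count id (take n s))%N) (iota 0 (size s).+1).

Definition matched (s : seq bool) (i j : nat) : bool :=
  [&& (i < j)%N, (j < size s)%N, nth false s i, ~~ nth false s j &
      balanced (take (j - i - 1) (drop i.+1 s))].

Definition matching_of (s : seq bool) : ograph := OGraph (size s) (matched s).

(* nested matching NM_k on [2k] (0-indexed: i + j = 2k - 1) *)
Definition NM (k : nat) : ograph := OGraph (2 * k) (fun i j => i + j == (2 * k).-1).

Definition paren (s : seq bool) : seq bool := true :: rcons s false.

(* nestB A k d = B_{k-d}: B_k = (A_k), B_j = (A_j B_{j+1} A_{2k-j}) *)
Fixpoint nestB (A : nat -> seq bool) (k d : nat) : seq bool :=
  match d with
  | 0 => paren (A k)
  | d'.+1 => paren (A (k - d) ++ nestB A k d' ++ A (k + d))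
  end.

From Stdlib Require Import ClassicalDescription.
From mathcomp Require Import all_boot zify.
Set Implicit Arguments. Unset Strict Implicit. Unset Printing Implicit Defensive.

(* Put n := k + t and let N := r_<(NM_n, K_3).  A coloring of K_N without blue
   triangle contains a red NM_n, i.e. vertices c_0 < ... < c_(2n-1) with every
   pair (c_j, c_(2n-1-j)) red.  We embed B_1 from the outside in: the outer
   parentheses of B_j go to the outermost unused pair, A_j goes to the next
   r_j := max(r_<(M_j, K_3), r_<(M_(2k-j), K_3)) vertices on the left and
   A_(2k-j) to the r_j vertices just inside on the right; the restriction of
   the coloring to r_j vertices still has no blue triangle, so these red
   copies exist.  Level j uses 1 + r_j pairs, so n pairs suffice, and the
   pieces appear in the order of B_1.  That r_< is finite (the
   definition returns 0 otherwise) is the greedy bound: |G|^2 vertices without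
   a blue triangle contain a red clique on |G| vertices. *)

Lemma balancedP s :
  reflect (count id s = count negb s /\
           forall n, count negb (take n s) <= count id (take n s))
          (balanced s).
Proof.
apply: (iffP andP) => [[/eqP bal /allP prefixes] | [bal prefixes]].
  split=> // n; have [le_n | /ltnW le_s] := leqP n (size s).
    by apply: prefixes; rewrite mem_iota.
  have := prefixes (size s); rewrite take_size take_oversize // mem_iota.
  by apply; lia.
by split; [apply/eqP | apply/allP => n _].
Qed.

Lemma balanced_cat u v : balanced u -> balanced v -> balanced (u ++ v).
Proof.
move=> /balancedP[bal_u pre_u] /balancedP[bal_v pre_v]; apply/balancedP.
split=> [|n]; first by rewrite !count_cat bal_u bal_v.
rewrite take_cat; case: ifP => _ //.
by rewrite !count_cat; have := pre_v (n - size u); lia.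
Qed.

Lemma balanced_paren u : balanced u -> balanced (paren u).
Proof.
move=> /balancedP[bal pre]; apply/balancedP; rewrite /paren -cats1.
split=> [|[|n]] //=; first by rewrite !count_cat /= bal; lia.
rewrite take_cat; case: ifP => _; first by have := pre n; lia.
by rewrite !count_cat; case: (n - size u) => [|m] /=; lia.
Qed.

Lemma balanced_nestB (A : nat -> seq bool) k d :
  (forall i, 1 <= i <= 2 * k - 1 -> balanced (A i)) -> d < k ->
  balanced (nestB A k d).
Proof.
move=> bal_A; elim: d => [|d IH] lt_dk /=; apply: balanced_paren.
  by apply: bal_A; lia.
by rewrite !balanced_cat ?IH ?bal_A //; lia.
Qed.

Lemma balanced_drop_open u i : balanced u -> i < size u -> nth false u i ->
  count id (drop i.+1 u) < count negb (drop i.+1 u).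
Proof.
move=> /balancedP[bal pre] lt_iu open_i.
have count_u p : count p u = count p (take i u) + p true + count p (drop i.+1 u).
  rewrite -{1}(cat_take_drop i.+1 u) (take_nth false lt_iu) open_i.
  by rewrite -cats1 !count_cat /= addn0.
by have := pre i; move: bal; rewrite !count_u /=; lia.
Qed.

Lemma matched_lt s i j : matched s i j -> i < j < size s.
Proof. by case/and5P => -> ->. Qed.

Lemma matched_cat u v i j : balanced u -> balanced v -> matched (u ++ v) i j ->
  matched u i j \/ size u <= i /\ matched v (i - size u) (j - size u).
Proof.
move=> bal_u bal_v /and5P[lt_ij]; rewrite size_cat !nth_cat => lt_j open_i close_j.
have [lt_ju | le_uj] := ltnP j (size u).
  rewrite lt_ju (ltn_trans lt_ij lt_ju) in open_i close_j *.
  rewrite drop_cat (leq_ltn_trans lt_ij lt_ju) takel_cat ?size_drop; last lia.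
  by left; apply/and5P.
have [lt_iu | le_ui] := ltnP i (size u).
  rewrite lt_iu in open_i; move=> /balancedP[_ /(_ (size u - i.+1))].
  rewrite take_takel ?take_drop ?subnK ?take_size_cat //; try lia.
  by have := balanced_drop_open bal_u lt_iu open_i; lia.
rewrite ltnNge le_ui ltnNge le_uj /= in open_i close_j.
rewrite drop_cat ltnNge (leq_trans le_ui (leqnSn _)) /= subSn //.
right; split=> //; apply/and5P; split=> //; try lia.
by rewrite (_ : j - size u - (i - size u) - 1 = j - i - 1) //; lia.
Qed.

Lemma matched_paren u i j : balanced u -> matched (paren u) i j ->
  i = 0 /\ j = (size u).+1 \/ 0 < i /\ matched u i.-1 j.-1.
Proof.
move=> bal_u /and5P[]; rewrite /paren /= size_rcons.
case: j => [|j] //; case: i => [|i] lt_ij lt_j /=; rewrite nth_rcons.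
  rewrite drop0 subn0 subn1 /= => _.
  have [lt_ju | le_uj] := ltnP j (size u); last by left; split=> //; lia.
  rewrite -cats1 takel_cat => [close_j /balancedP[bal_pre _] | ]; last exact: ltnW.
  have /balancedP[_ /(_ j.+1)] := bal_u.
  rewrite (take_nth false lt_ju) -cats1 !count_cat /=.
  by case: (nth false u j) close_j => //= _; lia.
move=> open_i close_j; have lt_iu : i < size u by case: ltnP open_i => // _; case: eqP.
rewrite lt_iu in open_i; rewrite subSS take_drop (_ : j - i - 1 + i.+1 = j); last lia.
rewrite -cats1 takel_cat; last lia.
have [lt_ju | le_uj] := ltnP j (size u).
  right; split=> //; apply/and5P; split=> //; try lia.
    by rewrite nth_rcons lt_ju in close_j.
  by rewrite take_drop (_ : j - i - 1 + i.+1 = j) //; lia.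
rewrite take_oversize // => /balancedP[bal_drop _].
by have := balanced_drop_open bal_u lt_iu open_i; lia.
Qed.

Notation ord_lt := (relpre val ltn).

Lemma pairwise_ord_enum n : pairwise ord_lt (enum 'I_n).
Proof.
rewrite -pairwise_map val_enum_ord -sorted_pairwise ?iota_ltn_sorted //.
exact: ltn_trans.
Qed.

Lemma subseq_enum_ord n (s : seq 'I_n) : pairwise ord_lt s -> subseq s (enum 'I_n).
Proof.
have lt_trans : transitive (ord_lt : rel 'I_n) by move=> ? ? ?; apply: ltn_trans.
move=> lt_s; rewrite (@irr_sorted_eq _ _ lt_trans _ s [seq x <- enum 'I_n | x \in s]).
- exact: filter_subseq.
- by move=> x; apply: ltnn.
- by rewrite sorted_pairwise.
- by rewrite sorted_filter // sorted_pairwise // pairwise_ord_enum.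
- by move=> x; rewrite mem_filter mem_enum andbT.
Qed.

(* [e] lists the images of the vertices of [G]; monotonicity is stated apart,
   as [pairwise ord_lt e], because subsequences inherit it for free. *)
Definition red_copy_seq (G : ograph) N (col : coloring N) (e : seq 'I_N) : Prop :=
  size e = ov G /\
  forall x0 i j, i < j < ov G -> oe G i j -> red col (nth x0 e i) (nth x0 e j).

Lemma has_red_copyP G N (col : coloring N) :
  reflect (exists2 e, pairwise ord_lt e & red_copy_seq G col e) (has_red_copy G col).
Proof.
apply: (iffP existsP) => [[phi /forallP copy] | [e lt_e [size_e red_e]]].
  have nth_phi x0 i (lt_i : i < ov G) :
      nth x0 (map phi (enum 'I_(ov G))) i = phi (Ordinal lt_i).
    by rewrite (nth_map (Ordinal lt_i)) ?size_enum_ord // (nth_ord_enum _ (Ordinal lt_i)).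
  exists (map phi (enum 'I_(ov G))).
    rewrite pairwise_map; apply: sub_pairwise (pairwise_ord_enum _) => u v lt_uv.
    have /forallP/(_ v)/andP[/implyP/(_ lt_uv) lt_phi _] := copy u.
    exact: lt_phi.
  split=> [|x0 i j /andP[lt_ij lt_j] e_ij]; first by rewrite size_map size_enum_ord.
  have lt_i := ltn_trans lt_ij lt_j; rewrite !nth_phi.
  have /forallP/(_ (Ordinal lt_j))/andP[_ /implyP] := copy (Ordinal lt_i).
  by apply; rewrite /= lt_ij.
have size_e' : size e == ov G by apply/eqP.
exists [ffun u => tnth (Tuple size_e') u]; apply/forallP => u; apply/forallP => v.
(* An opaque default: with [tnth _ u] itself, [!tnth_nth] would loop. *)
have [x0 _] : exists x0 : 'I_N, true by exists (tnth (Tuple size_e') u).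
rewrite !ffunE !(tnth_nth x0) /=.
have [u_e v_e] : u < size e /\ v < size e by rewrite size_e.
apply/andP; split; apply/implyP; first exact: (pairwiseP _ lt_e) u v u_e v_e.
by case/andP=> lt_uv; apply: red_e; rewrite lt_uv ltn_ord.
Qed.

Lemma red_clique N (col : coloring N) p (S : seq 'I_N) : ~~ has_blue_triangle col ->
  pairwise ord_lt S -> p * p <= size S ->
  exists C, [/\ pairwise [rel x y | ord_lt x y && red col x y] C,
                p <= size C & {subset C <= S}].
Proof.
move=> noblue; elim: p S => [|p IH] [|v S] //=; try by exists [::].
move=> /andP[lt_v lt_S] size_S.
pose B := [seq w <- S | ~~ red col v w]; pose R := [seq w <- S | red col v w].
have [le_B | lt_B] := leqP p.+1 (size B).
  exists B; split=> // [|w]; last by rewrite mem_filter inE => /andP[_ ->]; rewrite orbT.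
  have blueB : all [pred w | ord_lt v w && ~~ red col v w] B.
    apply/allP => w; rewrite mem_filter => /andP[blue_vw /(allP lt_v) lt_vw].
    exact/andP.
  apply: sub_in_pairwise blueB (pairwise_filter _ lt_S).
  move=> x y /andP[lt_vx blue_vx] /andP[_ blue_vy] lt_xy; apply/andP; split=> //.
  apply: contraNT noblue => blue_xy; apply/existsP; exists v.
  apply/existsP; exists x; apply/existsP; exists y.
  by apply/and5P; split.
have size_R : size R + size B = size S by rewrite !size_filter count_predC.
have le_R : p * p <= size R by move: size_S; rewrite mulSnr mulnSr; lia.
have [C [cliqueC size_C sub_C]] := IH R (pairwise_filter _ lt_S) le_R.
exists (v :: C); split=> /= [|//|w]; last first.
  rewrite !inE => /predU1P[-> | /sub_C]; rewrite ?eqxx //.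
  by rewrite mem_filter => /andP[_ ->]; rewrite orbT.
rewrite cliqueC andbT; apply/allP => w /sub_C; rewrite mem_filter => /andP[rvw w_S].
by rewrite /= rvw andbT; apply: (allP lt_v).
Qed.

Lemma ramsey_K3_prop_sq G : ramsey_K3_prop G (ov G * ov G).
Proof.
apply/forallP => col; case: (boolP (has_blue_triangle col)) => [_ | noblue].
  by rewrite orbT.
have [C [cliqueC size_C _]] :=
  red_clique noblue (pairwise_ord_enum _) (eq_leq (esym (size_enum_ord _))).
apply/orP; left; apply/has_red_copyP; exists (take (ov G) C).
  by apply: subseq_pairwise (take_subseq _ _) (sub_pairwise _ cliqueC) => x y /andP[].
split=> [|x0 i j /andP[lt_ij lt_j] _]; first exact: size_takel.
have lt_jC := leq_trans lt_j size_C.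
rewrite !nth_take ?(ltn_trans lt_ij) //.
by have /andP[] := (pairwiseP x0 cliqueC) i j (ltn_trans lt_ij lt_jC) lt_jC lt_ij.
Qed.

Lemma ord_ramsey_K3P G : ramsey_K3_prop G (ord_ramsey_K3 G).
Proof.
rewrite /ord_ramsey_K3; case: excluded_middle_informative => [ex | []].
  by case: ex_minnP.
by exists (ov G * ov G); apply: ramsey_K3_prop_sq.
Qed.

Lemma ord_ramsey_K3_min G N : ramsey_K3_prop G N -> ord_ramsey_K3 G <= N.
Proof.
move=> ramsey_N; rewrite /ord_ramsey_K3.
by case: excluded_middle_informative => // ex; case: ex_minnP => m _ /(_ N ramsey_N).
Qed.

Lemma ord_ramsey_K3_le G H :
  (forall N (col : coloring N),
     ~~ has_blue_triangle col -> has_red_copy H col -> has_red_copy G col) ->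
  ord_ramsey_K3 G <= ord_ramsey_K3 H.
Proof.
move=> HG; apply: ord_ramsey_K3_min; apply/forallP => col.
case: (boolP (has_blue_triangle col)) => [_ | noblue]; first by rewrite orbT.
move/forallP: (ord_ramsey_K3P H) => /(_ col).
by rewrite (negbTE noblue) !orbF; apply: HG.
Qed.

Lemma red_sym N (col : coloring N) x y : red col x y = red col y x.
Proof. by rewrite /red; case: ltngtP => // /val_inj->. Qed.

Section NoBlueTriangle.

Variables (N : nat) (col : coloring N).
Hypothesis noblue : ~~ has_blue_triangle col.

Lemma red_copy_of_ramsey G (L : seq 'I_N) :
  pairwise ord_lt L -> ramsey_K3_prop G (size L) ->
  exists2 e, subseq e L & red_copy_seq G col e.
Proof.
set f := tnth (in_tuple L) => lt_L.
have lt_f (a b : 'I_(size L)) : a < b -> f a < f b.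
  have [x0 _] : exists x0 : 'I_N, true by exists (f a).
  by rewrite /f !(tnth_nth x0) /=; apply: (pairwiseP _ lt_L) a b (ltn_ord a) (ltn_ord b).
move=> /forallP/(_ [ffun q => red col (f q.1) (f q.2)]).
set col' := [ffun _ => _]; have red' a b : red col' a b = red col (f a) (f b).
  by rewrite /red !ffunE; case: ifP => // _; apply: red_sym.
case/orP=> [/has_red_copyP[e' lt_e' [size_e' red_e']] |
            /existsP[a /existsP[b /existsP[c]]]].
  exists (map f e').
    by rewrite -[L in subseq _ L](map_tnth_enum (in_tuple L)) map_subseq ?subseq_enum_ord.
  split=> [|x0 i j lt_ij e_ij]; first by rewrite size_map.
  have [j0 _] : exists j0 : 'I_(size L), true.
    by case: (e') size_e' => [|j0 ?] /=; [lia | exists j0].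
  by rewrite !(nth_map j0) ?size_e' -?red'; [apply: red_e' | lia | lia].
rewrite !red' => /and5P[lt_ab lt_bc blue_ab blue_bc blue_ac].
case/negP: noblue; apply/existsP; exists (f a); apply/existsP; exists (f b).
by apply/existsP; exists (f c); rewrite !lt_f // blue_ab blue_bc blue_ac.
Qed.

Lemma red_copy_in_seq G (L : seq 'I_N) :
  pairwise ord_lt L -> ord_ramsey_K3 G <= size L ->
  exists2 e, subseq e L & red_copy_seq G col e.
Proof.
move=> lt_L le_L.
have [e sub_e copy_e] :
    exists2 e, subseq e (take (ord_ramsey_K3 G) L) & red_copy_seq G col e.
  apply: red_copy_of_ramsey; first exact: subseq_pairwise (take_subseq _ _) lt_L.
  by rewrite size_takel // ord_ramsey_K3P.
by exists e => //; apply: subseq_trans sub_e (take_subseq _ _).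
Qed.

End NoBlueTriangle.

Lemma red_copy_cat N (col : coloring N) u v e1 e2 : balanced u -> balanced v ->
  red_copy_seq (matching_of u) col e1 -> red_copy_seq (matching_of v) col e2 ->
  red_copy_seq (matching_of (u ++ v)) col (e1 ++ e2).
Proof.
move=> bal_u bal_v [/= size1 red1] [/= size2 red2].
split=> [|x0 i j _ /=]; first by rewrite /= !size_cat size1 size2.
rewrite !nth_cat size1.
case/(matched_cat bal_u bal_v) => [m_ij | [le_ui m_ij]].
  have /andP[lt_ij lt_j] := matched_lt m_ij.
  by rewrite lt_j (ltn_trans lt_ij lt_j); apply: red1 (matched_lt m_ij) m_ij.
have /andP[lt_ij lt_j] := matched_lt m_ij.
by rewrite !ifF; [apply: red2 (matched_lt m_ij) m_ij | lia | lia].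
Qed.

Lemma red_copy_paren N (col : coloring N) u e x y : balanced u -> red col x y ->
  red_copy_seq (matching_of u) col e ->
  red_copy_seq (matching_of (paren u)) col (x :: rcons e y).
Proof.
move=> bal_u red_xy [/= size_e red_e].
split=> [|x0 i j _ /=]; first by rewrite /paren /= !size_rcons size_e.
case/(matched_paren bal_u) => [[-> ->] | [lt0i m_ij]].
  by rewrite /= nth_rcons size_e ltnn eqxx.
have /andP[lt_ij lt_j] := matched_lt m_ij.
case: i j lt0i m_ij lt_ij lt_j => [|i] [|j] //= _ m_ij lt_ij lt_j.
rewrite !nth_rcons size_e lt_j (ltn_trans lt_ij lt_j).
exact: red_e (matched_lt m_ij) m_ij.
Qed.

Lemma red_copy_NM_cat N (col : coloring N) L F R n : size L = size R ->
  red_copy_seq (NM (size L + n)) col (L ++ F ++ R) -> red_copy_seq (NM n) col F.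
Proof.
move=> size_LR [/= size_LFR red_LFR].
have size_F : size F = 2 * n by move: size_LFR; rewrite !size_cat -size_LR; lia.
split=> // x0 i j /andP[lt_ij lt_j] /= /eqP sum_ij.
have nth_LFR m : m < size F -> nth x0 (L ++ F ++ R) (size L + m) = nth x0 F m.
  by move=> lt_m; rewrite nth_cat ltnNge leq_addr addKn nth_cat lt_m.
have := red_LFR x0 (size L + i) (size L + j).
by rewrite !nth_LFR ?size_F; [apply; [lia | apply/eqP; lia] | lia | lia].
Qed.

Lemma red_copy_NM_ends N (col : coloring N) F n : red_copy_seq (NM n.+1) col F ->
  exists x F' y, [/\ F = x :: rcons F' y, red col x y & red_copy_seq (NM n) col F'].
Proof.
case: F => [|x F]; first by case=> /=; lia.
case/lastP: F => [|F' y] copy_F; first by case: copy_F => /=; lia.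
exists x, F', y; split=> //; last first.
  by apply: (@red_copy_NM_cat _ _ [:: x] _ [:: y]); rewrite //= cats1.
case: copy_F => /= size_F /(_ x 0 (size F').+1); rewrite /= nth_rcons ltnn eqxx.
by rewrite size_rcons in size_F; apply; [lia | apply/eqP; lia].
Qed.

Lemma cat3_split (T : Type) (s : seq T) a b : a + b <= size s ->
  exists L M R, [/\ s = L ++ M ++ R, size L = a & size R = b].
Proof.
move=> le_ab; exists (take a s), (drop a (take (size s - b) s)), (drop (size s - b) s).
have le_a : a <= size s - b by lia.
split; first by rewrite catA -(take_takel s le_a) !cat_take_drop.
  by rewrite size_takel //; lia.
by rewrite size_drop; lia.
Qed.

Lemma subseq_cons_rcons (T : eqType) (x y : T) s1 s2 :
  subseq s1 s2 -> subseq (x :: rcons s1 y) (x :: rcons s2 y).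
Proof. by move=> sub12; rewrite /= eqxx -!cats1 cat_subseq ?subseq_refl. Qed.

Definition block_size (A : nat -> seq bool) k i :=
  maxn (ord_ramsey_K3 (matching_of (A i))) (ord_ramsey_K3 (matching_of (A (2 * k - i)))).

(* [frame_size A k d] pairs of a red nested matching carry B_(k-d): one pair
   for each of its parenthesis pairs and, between consecutive ones, blocks of
   [block_size] vertices on both sides for A_j and A_(2k-j). *)
Fixpoint frame_size (A : nat -> seq bool) k d :=
  if d is d'.+1 then (block_size A k (k - d)).+1 + frame_size A k d'
  else (block_size A k k).+1.

Lemma frame_size_sum A k d : d < k ->
  frame_size A k d = d.+1 + \sum_(k - d <= i < k.+1) block_size A k i.
Proof.
elim: d => [|d IH] lt_dk /=; first by rewrite subn0 big_nat1.
rewrite IH 1?ltnW // (big_ltn (_ : k - d.+1 < k.+1)); last lia.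
by rewrite (_ : (k - d.+1).+1 = k - d); lia.
Qed.

Section NestedCopy.

Variables (A : nat -> seq bool) (k : nat).
Hypothesis bal_A : forall i, 1 <= i <= 2 * k - 1 -> balanced (A i).
Variables (N : nat) (col : coloring N).
Hypothesis noblue : ~~ has_blue_triangle col.

Lemma red_copy_nestB d F : d < k -> pairwise ord_lt F ->
  red_copy_seq (NM (frame_size A k d)) col F ->
  exists2 e, subseq e F & red_copy_seq (matching_of (nestB A k d)) col e.
Proof.
elim: d F => [|d IH] F lt_dk lt_F copy_F /=.
  have [x [F' [y [eq_F red_xy [size_F' _]]]]] := red_copy_NM_ends copy_F.
  move: lt_F; rewrite eq_F /= pairwise_rcons => /andP[_ /andP[_ lt_F']].
  have le_F' : ord_ramsey_K3 (matching_of (A k)) <= size F'.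
    by rewrite size_F' /= /block_size; lia.
  have [e sub_e copy_e] := red_copy_in_seq noblue lt_F' le_F'.
  exists (x :: rcons e y); first exact: subseq_cons_rcons.
  by apply: red_copy_paren => //; apply: bal_A; lia.
rewrite /= addSn in copy_F.
have [x [F' [y [eq_F red_xy copy_F']]]] := red_copy_NM_ends copy_F.
move: lt_F; rewrite eq_F /= pairwise_rcons => /andP[_ /andP[_ lt_F']].
have [size_F' _] := copy_F'.
set p := block_size A k (k - d.+1) in copy_F' size_F'.
have le_pp : p + p <= size F' by rewrite size_F' /=; lia.
have [L [M [R [eq_F' size_L size_R]]]] := cat3_split le_pp.
rewrite eq_F' in copy_F' lt_F'.
have copy_M : red_copy_seq (NM (frame_size A k d)) col M.
  have eq_LR : size L = size R by rewrite size_L size_R.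
  by apply: (red_copy_NM_cat eq_LR); rewrite size_L.
move: lt_F'; rewrite !pairwise_cat => /and3P[_ lt_L /and3P[_ lt_M lt_R]].
have [e' sub_e' copy_e'] := IH M (ltnW lt_dk) lt_M copy_M.
have le_L : ord_ramsey_K3 (matching_of (A (k - d.+1))) <= size L.
  by rewrite size_L leq_maxl.
have le_R : ord_ramsey_K3 (matching_of (A (k + d.+1))) <= size R.
  by rewrite size_R /p /block_size (_ : 2 * k - (k - d.+1) = k + d.+1) ?leq_maxr //; lia.
have [e1 sub_e1 copy_e1] := red_copy_in_seq noblue lt_L le_L.
have [e2 sub_e2 copy_e2] := red_copy_in_seq noblue lt_R le_R.
exists (x :: rcons (e1 ++ e' ++ e2) y).
  by rewrite eq_F'; apply: subseq_cons_rcons; do 2?apply: cat_subseq.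
have [bal_l bal_r] : balanced (A (k - d.+1)) /\ balanced (A (k + d.+1)).
  by split; apply: bal_A; lia.
have bal_B := balanced_nestB bal_A (ltnW lt_dk).
apply: red_copy_paren red_xy _; first by rewrite !balanced_cat.
by do 2?apply: red_copy_cat; rewrite ?balanced_cat.
Qed.

Lemma has_red_copy_nestB : 0 < k ->
  has_red_copy (NM (frame_size A k (k - 1))) col ->
  has_red_copy (matching_of (nestB A k (k - 1))) col.
Proof.
move=> k_gt0 /has_red_copyP[F lt_F copy_F]; apply/has_red_copyP.
have lt_k : k - 1 < k by lia.
have [e sub_e copy_e] := red_copy_nestB lt_k lt_F copy_F.
by exists e => //; apply: subseq_pairwise sub_e lt_F.
Qed.

End NestedCopy.

Theorem lemma2p3 (k : nat) (A : nat -> seq bool) :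
  (1 <= k)%N ->
  (forall i, (1 <= i <= 2 * k - 1)%N -> balanced (A i)) ->
  balanced (nestB A k (k - 1)) /\
  (ord_ramsey_K3 (matching_of (nestB A k (k - 1)))
   <= ord_ramsey_K3
        (NM (k + \sum_(1 <= i < k.+1)
                   maxn (ord_ramsey_K3 (matching_of (A i)))
                        (ord_ramsey_K3 (matching_of (A (2 * k - i)))))))%N.
Proof.
move=> k_gt0 bal_A; split; first by apply: balanced_nestB bal_A _; lia.
rewrite (_ : k + _ = frame_size A k (k - 1)).
  by apply: ord_ramsey_K3_le => N col noblue; apply: has_red_copy_nestB.
by rewrite frame_size_sum ?subKn ?subn1 ?prednK.
Qed.
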